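(* Let $n\ge 2$, $b\ge 2$ and $1\le r<b$ be integers with $n\ge b-r-1$. Then $\chi(G_{nb+r,b})=n+1$. More precisely, with $k=n-b+r+1$, the vertex set $\{0,1,\ldots,nb+r-1\}$ can be partitioned into $k$ blocks of $b$ consecutive integers followed by $b-r$ blocks of $b-1$ consecutive integers (i.e. $V_i=\{(i-1)b,\ldots,ib-1\}$ for $1\le i\le k$ and $V_i=\{(i-1)(b-1)+k,\ldots,i(b-1)+k-1\}$ for $k+1\le i\le n+1$), and this is a proper $(n+1)$-coloring.
   Context: For integers $a\ge 2b\ge 2$, $G_{a,b}$ is the graph with vertex set $\{0,1,\ldots,a-1\}$ in which distinct $u,v$ are adjacent if and only if $u\in\{v+b,v+b+1,\ldots,v+a-b\}$ with addition modulo $a$. $\chi(G)$ denotes the chromatic number. *)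

From mathcomp Require Import all_boot.
Set Implicit Arguments. Unset Strict Implicit. Unset Printing Implicit Defensive.

(* Adjacency in G_{a,b} on vertex set {0,...,a-1} ('I_a):
   u ~ v iff u <> v and u = v + j (mod a) for some j in {b,...,a-b},
   i.e. (u - v) mod a lies in [b, a-b]. *)
Definition Gadj (a b : nat) (u v : 'I_a) : bool :=
  (u != v) && (b <= (u + a - v) %% a <= a - b).
Arguments Gadj : clear implicits.

Definition proper_coloring (a b k : nat) (c : 'I_a -> 'I_k) : Prop :=
  forall u v : 'I_a, Gadj a b u v -> c u != c v.
Arguments proper_coloring : clear implicits.

Definition colorableb (a b k : nat) : bool :=
  [exists c : {ffun 'I_a -> 'I_k},
     [forall u : 'I_a, forall v : 'I_a, Gadj a b u v ==> (c u != c v)]].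

Lemma colorable_exists (a b : nat) : exists k, colorableb a b k.
Proof.
exists a; apply/existsP; exists [ffun u => u].
by apply/forallP => u; apply/forallP => v; apply/implyP => /andP[H _]; rewrite !ffunE.
Qed.

Definition chi (a b : nat) : nat := ex_minn (colorable_exists a b).

(* The block V_i (1-indexed) of the paper, with k = n - b + r + 1. *)
Definition in_block (n b r i v : nat) : bool :=
  let k := n + r + 1 - b in
  ((1 <= i <= k) && ((i - 1) * b <= v <= i * b - 1))
  || ((k + 1 <= i <= n + 1) &&
      ((i - 1) * (b - 1) + k <= v <= i * (b - 1) + k - 1)).

(** An independent set of G_{a,b} (2b <= a) lies in a circular arc of b
   consecutive vertices, so each colour class of a proper colouring has at most
   b vertices and chi(G_{a,b}) >= a/b; with a = nb + r and r >= 1 this forces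
   n + 1 colours.  Conversely the blocks V_i are runs of at most b consecutive
   integers, hence independent: V_i starts at i(b-1) + min(i, k) (0-indexed),
   these starts increase strictly, and the last block ends at nb + r. *)

From mathcomp Require Import all_boot zify.
Set Implicit Arguments. Unset Strict Implicit. Unset Printing Implicit Defensive.

Lemma modn_subDr a x u : x < a -> u < a ->
  (u + a - x) %% a = if x <= u then u - x else u + a - x.
Proof.
move=> xa ua; case: ifP => xu; last by rewrite modn_small //; lia.
by rewrite addnC -addnBA // modnDl modn_small //; lia.
Qed.

Lemma Gadj_near a b (u v : 'I_a) : u < v + b -> v < u + b -> ~~ Gadj a b u v.
Proof.
move=> uv vu; rewrite /Gadj negb_and modn_subDr //.
by case: ifP => _; apply/orP; right; lia.
Qed.

Section IndependentSets.
Variables (a b : nat).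
Hypotheses (b_gt0 : 0 < b) (ab : 2 * b <= a).

(* A vertex u that is not adjacent to x has offset d = u - x (mod a) in
   [0, b) or in (a - b, a); folding the second range onto (0, b) identifies
   only offsets differing by b, i.e. adjacent vertices. *)
Definition fold_offset (x u : nat) :=
  let d := (u + a - x) %% a in if d < b then d else d + b - a.

Lemma nonadjE (u v : 'I_a) :
  ~~ Gadj a b u v = (val u == val v) || ~~ (b <= (u + a - v) %% a <= a - b).
Proof. by rewrite /Gadj negb_and negbK. Qed.

Lemma fold_offset_lt (x u : 'I_a) : ~~ Gadj a b u x -> fold_offset x u < b.
Proof.
rewrite nonadjE /fold_offset !modn_subDr //.
by have := ltn_ord u; repeat case: ifP => ?; lia.
Qed.

Lemma fold_offset_inj (x u v : 'I_a) :
  ~~ Gadj a b u x -> ~~ Gadj a b v x -> ~~ Gadj a b u v ->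
  fold_offset x u = fold_offset x v -> u = v.
Proof.
rewrite !nonadjE /fold_offset !modn_subDr // => ux vx uv e; apply: val_inj.
move: e ux vx uv; have := ltn_ord u; have := ltn_ord v; have := ltn_ord x.
case: (leqP x u) => ?; case: (leqP x v) => ?; case: (leqP v u) => ? /=;
  by repeat case: ifP => ?; lia.
Qed.

Lemma independent_card (S : {set 'I_a}) :
  {in S &, forall u v, ~~ Gadj a b u v} -> #|S| <= b.
Proof.
move=> indS; have [-> | [x xS]] := set_0Vmem S; first by rewrite cards0.
pose f (u : 'I_a) : 'I_b := insubd (Ordinal b_gt0) (fold_offset x u).
have fE u : u \in S -> val (f u) = fold_offset x u.
  by move=> uS; rewrite val_insubd fold_offset_lt ?indS.
rewrite -[b in _ <= b]card_ord; apply: (leq_card_in f) => u v uS vS e.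
by apply: (fold_offset_inj (x := x)); rewrite ?indS // -!fE // e.
Qed.

Lemma coloring_card k (c : 'I_a -> 'I_k) : proper_coloring a b k c -> a <= k * b.
Proof.
move=> col; rewrite -[a in a <= _]card_ord -sum1_card (partition_big c xpredT) //=.
rewrite -[k in k * b]card_ord -sum_nat_const leq_sum // => i _.
rewrite sum1_card -[#|_|]cardsE; apply: independent_card => u v.
rewrite !inE => /eqP cu /eqP cv; apply/negP => /col; by rewrite -val_eqE cu cv eqxx.
Qed.

End IndependentSets.

Lemma colorableP a b k :
  reflect (exists c, proper_coloring a b k c) (colorableb a b k).
Proof.
apply: (iffP existsP) => [[c /forallP cP] | [c cP]].
  by exists c => u v; move: (cP u) => /forallP/(_ v)/implyP; apply.
exists (finfun c); apply/forallP => u; apply/forallP => v; apply/implyP.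
by rewrite !ffunE; apply: cP.
Qed.

Lemma chi_le a b k : colorableb a b k -> chi a b <= k.
Proof. by rewrite /chi; case: ex_minnP => m _; apply. Qed.

Lemma chi_colorable a b : colorableb a b (chi a b).
Proof. by rewrite /chi; case: ex_minnP. Qed.

Lemma chi_lower_bound a b : 0 < b -> 2 * b <= a -> a <= chi a b * b.
Proof.
move=> b_gt0 ab; have /colorableP[c cP] := chi_colorable a b.
exact: coloring_card cP.
Qed.

Lemma chi_le_blocks a b m (B : 'I_m -> 'I_a -> bool) :
  (forall v, exists i, B i v) ->
  (forall i u v, B i u -> B i v -> ~~ Gadj a b u v) ->
  chi a b <= m.
Proof.
move=> /fin_all_exists[c cB] Bind; apply: chi_le; apply/colorableP; exists c.
move=> u v uv; apply/negP => /eqP cuv.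
by move: (Bind _ _ v (cB u)); rewrite cuv => /(_ (cB v)); rewrite uv.
Qed.

Section IntervalPartition.
Variable f : nat -> nat.

Lemma interval_index_exists m v :
  f 0 <= v < f m -> exists2 i, i < m & f i <= v < f i.+1.
Proof.
elim: m => [|m IHm] /andP[f0v vfm]; first by rewrite ltnNge f0v in vfm.
have [vm | mv] := ltnP v (f m); last by exists m; rewrite ?mv.
by have [|i im iv] := IHm; [rewrite f0v | exists i; first exact: ltnW].
Qed.

Hypothesis f_incr : {homo f : i j / i < j}.

Lemma interval_index_uniq i j v :
  f i <= v < f i.+1 -> f j <= v < f j.+1 -> i = j.
Proof.
have f_ltn k l : f k < f l -> k < l.
  by rewrite !ltnNge (leq_mono f_incr).
move=> /andP[fi vi] /andP[fj vj]; apply/anti_leq.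
by rewrite -(ltnS i j) -(ltnS j i); apply/andP; split; apply: f_ltn;
  [exact: leq_ltn_trans fi vj | exact: leq_ltn_trans fj vi].
Qed.
End IntervalPartition.

Section Blocks.
Variables n b r : nat.
Hypotheses (hb : 2 <= b) (hrb : r < b) (hnbr : b - r - 1 <= n).

Definition block_start j := j * (b - 1) + minn j (n + r + 1 - b).

Lemma block_start_incr : {homo block_start : i j / i < j}.
Proof.
apply: homo_ltn => [j i k|i]; first exact: ltn_trans.
by rewrite /block_start mulSnr; lia.
Qed.

Lemma block_start_step j : block_start j.+1 <= block_start j + b.
Proof. by rewrite /block_start mulSnr; lia. Qed.

Lemma block_start_last : block_start n.+1 = n * b + r.
Proof. by rewrite /block_start mulSnr mulnBr muln1; nia. Qed.

Lemma in_block0 v : in_block n b r 0 v = false.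
Proof. by apply/negbTE; rewrite /in_block; lia. Qed.

Lemma in_blockE i v :
  in_block n b r i.+1 v = (i <= n) && (block_start i <= v < block_start i.+1).
Proof.
have ib : i <= i * b by rewrite leq_pmulr // ltnW.
rewrite /in_block /block_start subn1 /= !mulnBr !muln1 mulSn.
by apply/idP/idP; lia.
Qed.

Lemma in_block_partition (v : 'I_(n * b + r)) :
  exists i, [/\ 1 <= i <= n + 1, in_block n b r i v &
              forall j, in_block n b r j v -> j = i].
Proof.
have [|i i_le iv] := @interval_index_exists block_start n.+1 v.
  by rewrite block_start_last ltn_ord /block_start mul0n min0n.
exists i.+1; split; [by rewrite addn1 | by rewrite in_blockE -ltnS i_le iv |].
case=> [|j]; first by rewrite in_block0.
by rewrite in_blockE => /andP[_ jv]; rewrite (interval_index_uniq block_start_incr jv iv).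
Qed.

Lemma in_block_independent i (u v : 'I_(n * b + r)) :
  in_block n b r i u -> in_block n b r i v -> ~~ Gadj (n * b + r) b u v.
Proof.
case: i => [|i]; first by rewrite in_block0.
rewrite !in_blockE => /and3P[_ iu ui] /and3P[_ iv vi].
by apply: Gadj_near; have := block_start_step i; lia.
Qed.
End Blocks.

Theorem mainTheorem8 (n b r : nat) (hn : 2 <= n) (hb : 2 <= b)
  (hr1 : 1 <= r) (hrb : r < b) (hnbr : b - r - 1 <= n) :
  chi (n * b + r) b = n + 1 /\
  (forall v : 'I_(n * b + r),
     exists i, [/\ 1 <= i <= n + 1, in_block n b r i v &
                 forall j, in_block n b r j v -> j = i]) /\
  (forall (i : nat) (u v : 'I_(n * b + r)),
     in_block n b r i u -> in_block n b r i v -> ~~ Gadj (n * b + r) b u v).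
Proof.
have partition := in_block_partition hb hrb hnbr.
have independent := in_block_independent hb hrb hnbr.
split=> //; apply/anti_leq/andP; split.
  apply: (chi_le_blocks (B := fun i : 'I_(n + 1) => in_block n b r i.+1)) => [v|i u v].
    have [[|i] [/andP[_ i_le] iv _]] := partition v; first by rewrite in_block0 in iv.
    by exists (Ordinal i_le).
  exact: independent.
have ab : 2 * b <= n * b + r.
  by apply: leq_trans (leq_addr r _); rewrite leq_mul2r hn orbT.
rewrite addn1 ltnNge; apply/negP => chi_le_n.
have := leq_trans (chi_lower_bound (ltnW hb) ab) (leq_mul chi_le_n (leqnn b)).
lia.
Qed.
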